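(* For every program $C$, every hyperquantity $ff$ and every quantity $f\in\mathbb A$, $$\mathrm{whp}[C](ff)(f)\;=\;ff\big(\mathrm{sp}[C](f)\big).$$
   Context: Semiring. Fix $\mathcal A=\langle U,\oplus,\odot,\mathbb 0,\mathbb 1\rangle$, a possibly partial semiring: $\langle U,\oplus,\mathbb 0\rangle$ is a commutative monoid in which $\oplus$ may be partial, $\langle U,\odot,\mathbb 1\rangle$ is a (total) monoid, $\odot$ distributes over $\oplus$ on both sides, and $\mathbb 0\odot u=u\odot\mathbb 0=\mathbb 0$. The natural order is $u\le v$ iff $u\oplus w=v$ for some $w\in U$. Standing assumptions: $\le$ is a complete partial order; $\mathcal A$ is complete (there is an infinitary sum $\bigoplus_{i\in I}$ that agrees with $\oplus$ on finite index sets, satisfies $v\odot\bigoplus_i u_i=\bigoplus_i v\odot u_i$ and $(\bigoplus_i u_i)\odot v=\bigoplus_i u_i\odot v$ whenever defined, and is invariant under partitioning the index set); $\mathcal A$ is Scott continuous (for every directed $D\subseteq U$ and $y\in U$: $\sup_{x\in D}(x\oplus y)=(\sup D)\oplus y$, $\sup_{x\in D}(x\odot y)=(\sup D)\odot y$, $\sup_{x\in D}(y\odot x)=y\odot\sup D$); and $U$ has a greatest element. States and quantities. $\mathrm{Vars}$ is a finite set of variables, $\Sigma=\{\sigma:\mathrm{Vars}\to\mathbb N\}$, and $\sigma[x\mapsto v]$ is $\sigma$ with $x$ updated to $v$. Each expression $e$ denotes a function $\llbracket e\rrbracket:\Sigma\to\mathbb N\cup U$. A quantity is a function $f:\Sigma\to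 U$; $\mathbb A$ is the set of quantities; $\oplus,\odot$ and constants are lifted pointwise. $[\varphi](\sigma)=\mathbb 1$ if $\sigma\models\varphi$ and $\mathbb 0$ otherwise. $f[x/\alpha]$ denotes $\sigma\mapsto f(\sigma[x\mapsto\alpha])$. Programs. $C::= x:=e\mid x:=\ast\mid \mathtt{weight}\ e\mid C;C\mid C+C\mid \mathtt{iter}(C,e,e')$ (semantics $\llbracket C\rrbracket:\Sigma\times\Sigma\to U$ as usual for weighted programs; programs are assumed well-formed so that all sums arising are defined). Strongest post $\mathrm{sp}[C]:\mathbb A\to\mathbb A$: $\mathrm{sp}[x:=e](f)=\bigoplus_{\alpha\in\mathbb N}f[x/\alpha]\odot[x=e[x/\alpha]]$ with $[x=e[x/\alpha]](\sigma)=\mathbb 1$ iff $\sigma(x)=\llbracket e\rrbracket(\sigma[x\mapsto\alpha])$; $\mathrm{sp}[x:=\ast](f)=\bigoplus_{\alpha}f[x/\alpha]$; $\mathrm{sp}[\mathtt{weight}\ w](f)=f\odot\llbracket w\rrbracket$; $\mathrm{sp}[C_1;C_2](f)=\mathrm{sp}[C_2](\mathrm{sp}[C_1](f))$; $\mathrm{sp}[C_1+C_2](f)=\mathrm{sp}[C_1](f)\oplus\mathrm{sp}[C_2](f)$; $\mathrm{sp}[\mathtt{iter}(C,e,e')](f)=\big(\mathrm{lfp}\,X.\ f\oplus\mathrm{sp}[C](X\odot\llbracket e\rrbracket)\big)\odot\llbracket e'\rrbracket$ (pointwise natural order on $\mathbb A$). Hyperquantities. A hyperquantity is a function $ff:\mathbb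 A\to[0,+\infty]$; they are ordered pointwise. For $\nu\in\mathbb A$, $\chi_\nu$ is the hyperquantity with $\chi_\nu(g)=1$ if $g=\nu$ and $0$ otherwise. Sums and products of values of hyperquantities are taken in $[0,+\infty]$ with $0\cdot\infty=0$. Weakest hyper pre $\mathrm{whp}[C]$ (hyperquantities to hyperquantities), defined inductively: $\mathrm{whp}[x:=e](ff)=\lambda f.\ ff(\mathrm{sp}[x:=e](f))$; $\mathrm{whp}[x:=\ast](ff)=\lambda f.\ ff(\bigoplus_{\alpha\in\mathbb N}f[x/\alpha])$; $\mathrm{whp}[\mathtt{weight}\ w](ff)=\lambda f.\ ff(f\odot\llbracket w\rrbracket)$; $\mathrm{whp}[C_1;C_2](ff)=\mathrm{whp}[C_1](\mathrm{whp}[C_2](ff))$; $\mathrm{whp}[C_1+C_2](ff)=\lambda f.\ \sum_{\nu_1,\nu_2\in\mathbb A}ff(\nu_1\oplus\nu_2)\cdot\mathrm{whp}[C_1](\chi_{\nu_1})(f)\cdot\mathrm{whp}[C_2](\chi_{\nu_2})(f)$ (terms with $\nu_1\oplus\nu_2$ undefined omitted); $\mathrm{whp}[\mathtt{iter}(C,e,e')](ff)=\lambda f.\ ff\big((\mathrm{lfp}\,X.\ f\oplus\mathrm{sp}[C](X\odot\llbracket e\rrbracket))\odot\llbracket e'\rrbracket\big)$. *)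

From HB Require Import structures.
From mathcomp Require Import all_boot all_order all_algebra.
From mathcomp Require Import boolp classical_sets reals constructive_ereal ereal esum.
Set Implicit Arguments. Unset Strict Implicit. Unset Printing Implicit Defensive.
Import Order.TTheory GRing.Theory Num.Theory.

Definition ofun {J T : Type} (h : J -> option T) : option (J -> T) :=
  match pselect (exists F : J -> T, forall j, h j = Some (F j)) with
  | left P => Some (proj1_sig (cid P))
  | right _ => None
  end.

Section PSemiringDefs.
Variables (U : Type) (padd : U -> U -> option U).
Definition nle (u v : U) : Prop := exists w, padd u w = Some v.
Definition is_ub (D : set U) (s : U) : Prop := forall x, D x -> nle x s.
Definition is_sup (D : set U) (s : U) : Prop :=
  is_ub D s /\ forall t, is_ub D t -> nle s t.
Definition directed (D : set U) : Prop :=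
  (exists x, D x) /\
  forall x y, D x -> D y -> exists z, D z /\ nle x z /\ nle y z.
End PSemiringDefs.

Record psemiring := PSemiring {
  car :> Type;
  padd : car -> car -> option car;
  pmul : car -> car -> car;
  pzero : car;
  pone : car;
  psum : forall I : Type, (I -> car) -> option car;
  padd_comm : forall u v, padd u v = padd v u;
  padd_assoc : forall u v w,
    obind (fun x => padd x w) (padd u v) = obind (fun y => padd u y) (padd v w);
  padd0 : forall u, padd pzero u = Some u;
  pmul_assoc : forall u v w, pmul u (pmul v w) = pmul (pmul u v) w;
  pmul1l : forall u, pmul pone u = u;
  pmul1r : forall u, pmul u pone = u;
  pmulDl : forall x u v w, padd u v = Some w ->
    padd (pmul x u) (pmul x v) = Some (pmul x w);
  pmulDr : forall x u v w, padd u v = Some w ->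
    padd (pmul u x) (pmul v x) = Some (pmul w x);
  pmul0l : forall u, pmul pzero u = pzero;
  pmul0r : forall u, pmul u pzero = pzero;
  nle_antisym : forall u v, nle padd u v -> nle padd v u -> u = v;
  nle_dcpo : forall D : set car, directed padd D -> exists s, is_sup padd D s;
  psum_ord0 : forall g : 'I_0 -> car, psum g = Some pzero;
  psum_ordS : forall n (g : 'I_n.+1 -> car),
    psum g = obind (fun s => padd s (g ord_max))
                   (psum (fun i : 'I_n => g (widen_ord (leqnSn n) i)));
  psum_bij : forall (I J : Type) (h : I -> J) (g : J -> car),
    bijective h -> psum (fun i => g (h i)) = psum g;
  psum_mull : forall (I : Type) (g : I -> car) v s, psum g = Some s ->
    psum (fun i => pmul v (g i)) = Some (pmul v s);
  psum_mulr : forall (I : Type) (g : I -> car) v s, psum g = Some s ->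
    psum (fun i => pmul (g i) v) = Some (pmul s v);
  psum_partition : forall (I J : Type) (p : I -> J) (g : I -> car),
    psum g = obind (fun s => psum s)
               (ofun (fun j => psum (fun i : {i : I | p i = j} => g (proj1_sig i))));
  scott_addr : forall (D : set car) y s t, directed padd D -> is_sup padd D s ->
    padd s y = Some t ->
    is_sup padd [set z | exists2 x, D x & padd x y = Some z] t;
  scott_mulr : forall (D : set car) y s, directed padd D -> is_sup padd D s ->
    is_sup padd [set pmul x y | x in D] (pmul s y);
  scott_mull : forall (D : set car) y s, directed padd D -> is_sup padd D s ->
    is_sup padd [set pmul y x | x in D] (pmul y s);
  ptop : exists t, forall u, nle padd u t
}.

Section Programs.
Variables (S : psemiring) (V : finType).

Definition state := V -> nat.
Definition upd (s : state) (x : V) (v : nat) : state :=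
  fun y => if y == x then v else s y.

Definition quantity := state -> S.

Inductive prog :=
| Assign of V & (state -> nat)
| Havoc of V
| Weight of (state -> S)
| Seq of prog & prog
| Choice of prog & prog
| Iter of prog & (state -> S) & (state -> S).

Definition addA (f g : quantity) : option quantity :=
  ofun (fun s => padd (f s) (g s)).
Definition mulA (f g : quantity) : quantity := fun s => pmul (f s) (g s).
Definition sumA (I : Type) (g : I -> quantity) : option quantity :=
  ofun (fun s => psum (fun i => g i s)).
Definition leA (f g : quantity) : Prop := forall s, nle (@padd S) (f s) (g s).
Definition substA (f : quantity) (x : V) (a : nat) : quantity :=
  fun s => f (upd s x a).
Definition eqind (x : V) (e : state -> nat) (a : nat) : quantity :=
  fun s => if s x == e (upd s x a) then pone S else pzero S.

Definition lfpA (F : quantity -> option quantity) : option quantity :=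
  match pselect (exists X, F X = Some X /\ forall Y, F Y = Some Y -> leA X Y) with
  | left P => Some (proj1_sig (cid P))
  | right _ => None
  end.

(* strongest post (partial, as ⊕ may be partial) *)
Fixpoint sp (C : prog) (f : quantity) : option quantity :=
  match C with
  | Assign x e => sumA (fun a : nat => mulA (substA f x a) (eqind x e a))
  | Havoc x => sumA (fun a : nat => substA f x a)
  | Weight w => Some (mulA f w)
  | Seq C1 C2 => obind (sp C2) (sp C1 f)
  | Choice C1 C2 =>
      match sp C1 f, sp C2 f with
      | Some g1, Some g2 => addA g1 g2
      | _, _ => None
      end
  | Iter C0 e e' =>
      omap (fun X => mulA X e')
        (lfpA (fun X => obind (addA f) (sp C0 (mulA X e))))
  end.

Variable R : realType.
Local Open Scope ereal_scope.

Definition hyperquantity := quantity -> \bar R.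

Definition happ (ff : hyperquantity) (o : option quantity) : \bar R :=
  if o is Some g then ff g else 0.

Definition chi (nu : quantity) : hyperquantity :=
  fun g => if pselect (g = nu) then 1 else 0.

Fixpoint whp (C : prog) (ff : hyperquantity) : hyperquantity :=
  match C with
  | Assign x e => fun f => happ ff (sp (Assign x e) f)
  | Havoc x => fun f => happ ff (sumA (fun a : nat => substA f x a))
  | Weight w => fun f => ff (mulA f w)
  | Seq C1 C2 => whp C1 (whp C2 ff)
  | Choice C1 C2 => fun f =>
      (\esum_(p in [set: {classic (quantity * quantity)%type}])
         (match addA p.1 p.2 with
          | Some g => ff g * whp C1 (chi p.1) f * whp C2 (chi p.2) f
          | None => 0
          end)%E)%R
  | Iter C0 e e' => fun f =>
      happ ff (omap (fun X => mulA X e')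
                 (lfpA (fun X => obind (addA f) (sp C0 (mulA X e)))))
  end.

End Programs.

From Pilot Require Import Defs.
From HB Require Import structures.
From mathcomp Require Import all_boot all_order all_algebra.
From mathcomp Require Import boolp classical_sets reals constructive_ereal ereal esum.
Import Order.TTheory GRing.Theory Num.Theory.
Local Open Scope ereal_scope.
Local Open Scope classical_set_scope.

(* Except for [C1 + C2], whp evaluates ff at the very
   expression defining sp. For [C1 + C2] the induction hypothesis, applied to
   the indicators chi_nu, turns whp[Ci](chi_nu)(f) into chi_nu(sp[Ci](f)), so the
   sum over pairs (nu1, nu2) collapses to the single pair (sp[C1] f, sp[C2] f).
   Because the induction hypothesis needs a nonnegative hyperquantity, the
   sequential case relies on whp preserving nonnegativity. *)

Section WeakestHyperPre.
Variables (S : psemiring) (V : finType) (R : realType).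
Local Notation quantity := (quantity S V).
Local Notation pair_index := {classic (quantity * quantity)%type}.

Lemma chi_ge0 (nu g : quantity) : 0 <= chi R nu g.
Proof. by rewrite /chi; case: pselect. Qed.

Lemma happ_ge0 (ff : hyperquantity S V R) o :
  (forall g, 0 <= ff g) -> 0 <= happ ff o.
Proof. by move=> ff0; case: o. Qed.

Lemma whp_ge0 (C : prog S V) (ff : hyperquantity S V R) :
  (forall g, 0 <= ff g) -> forall f, 0 <= whp C ff f.
Proof.
elim: C ff => [x e|x|w|C1 IH1 C2 IH2|C1 IH1 C2 IH2|C0 IH e e'] ff ff0 f /=;
  try exact: happ_ge0.
- exact: ff0.
- by apply: IH1 => g; apply: IH2.
- apply: esum_ge0 => -[p1 p2] _ /=; case: (Defs.addA p1 p2) => // h.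
  by rewrite !mule_ge0 //; [apply: IH1 | apply: IH2]; apply: chi_ge0.
Qed.

Lemma esum_chi_pair (F : pair_index -> \bar R) (g1 g2 : quantity) :
  0 <= F (g1, g2) ->
  (\esum_(p in [set: pair_index]) (F p * chi R p.1 g1 * chi R p.2 g2)%E)%R
    = F (g1, g2).
Proof.
move=> F0; rewrite -(esum_set1 F0) [in RHS]esum_mkcond.
apply: eq_esum => -[p1 p2] _ /=; rewrite /chi.
case: pselect => [e1|ne1]; case: pselect => [e2|ne2].
- by subst; rewrite mem_set // !mule1.
- by rewrite memNset ?mule0 // => -[_ /esym].
- by rewrite memNset ?mule0 ?mul0e // => -[/esym].
- by rewrite memNset ?mule0 // => -[/esym].
Qed.

Lemma whp_Choice_collapse (C1 C2 : prog S V) (ff : hyperquantity S V R)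
    (f g1 g2 : quantity) :
  (forall g, 0 <= ff g) ->
  (forall nu, whp C1 (chi R nu) f = chi R nu g1) ->
  (forall nu, whp C2 (chi R nu) f = chi R nu g2) ->
  whp (Defs.Choice C1 C2) ff f = happ ff (Defs.addA g1 g2).
Proof.
move=> ff0 whp1 whp2 /=.
rewrite -[RHS](esum_chi_pair (fun p : pair_index => happ ff (Defs.addA p.1 p.2)));
  last exact: happ_ge0.
apply: eq_esum => -[p1 p2] _ /=; rewrite whp1 whp2.
by case: (Defs.addA p1 p2) => //=; rewrite !mul0e.
Qed.

End WeakestHyperPre.

Theorem mainTheorem4 (S : psemiring) (V : finType) (R : realType)
  (C : prog S V) (ff : hyperquantity S V R) (f : quantity S V) :
  (forall g, (0 <= ff g)%E) ->
  forall g, sp C f = Some g -> whp C ff f = ff g.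
Proof.
elim: C ff f => [x e|x|w|C1 IH1 C2 IH2|C1 IH1 C2 IH2|C0 IH e e'] ff f ff0 g /=;
  try by move=> ->.
- by case=> <-.
- case sp1: (sp C1 f) => [g1|] //= sp2.
  rewrite (IH1 _ _ _ g1) //; last exact: whp_ge0.
  exact: IH2.
- case sp1: (sp C1 f) => [g1|] //; case sp2: (sp C2 f) => [g2|] // sum12.
  have whp1 nu : whp C1 (chi R nu) f = chi R nu g1.
    exact: IH1 (@chi_ge0 _ _ R nu) _ sp1.
  have whp2 nu : whp C2 (chi R nu) f = chi R nu g2.
    exact: IH2 (@chi_ge0 _ _ R nu) _ sp2.
  by rewrite -[ff g]/(happ ff (Some g)) -sum12; exact: whp_Choice_collapse.
Qed.
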